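(* Let $d\ge2$ be an integer, $p\in(0,1]$, $\lambda\in(0,1)$, $b=1-(1-p)\lambda$, and let $\bar F$ be the solution of $\bar F'(w)=\lambda(p\bar F(w)^d+(1-p)\bar F(w))-\bar F(w)$, $\bar F(0)=\lambda$. Then $$\int_0^\infty\bar F(w)\,dw=\frac{\lambda}{b}\sum_{n=0}^\infty\frac1{1+n(d-1)}\left(\frac{p\lambda^d}{b}\right)^n.$$ In particular, for $d=2$, $\int_0^\infty\bar F(w)\,dw=-\frac{\log\left(1-\frac{p\lambda^2}{b}\right)}{p\lambda}$.
   Context: $\int_0^\infty\bar F(w)\,dw$ is the mean workload (equivalently the mean queue length) of a server under the LL($d,p$) policy. *)

From Stdlib Require Import Reals.
From Coquelicot Require Import Coquelicot.
Open Scope R_scope.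

Definition is_LL_solution (d : nat) (p lam : R) (F : R -> R) : Prop :=
  (forall w, 0 < w ->
     is_derive F w (lam * (p * F w ^ d + (1 - p) * F w) - F w)) /\
  filterlim F (at_right 0) (locally (F 0)) /\
  F 0 = lam.

(* Write d = e + 2 and b = 1 - (1 - p) lam.  The right-hand side of the ODE
   factors as  lam (p y^d + (1 - p) y) - y = - y r(y)  with the rate
   r(y) = b - lam p y^(d-1), which is at least the gap c = b - p lam^d > 0
   on [-lam, lam]. *)

From Stdlib Require Import Reals Lra Lia Psatz.
From Coquelicot Require Import Coquelicot.
Open Scope R_scope.

Definition continuous_on_nonneg (g : R -> R) : Prop :=
  forall t, 0 <= t -> forall eps, 0 < eps -> exists del, 0 < del /\
    forall s, 0 <= s -> Rabs (s - t) < del -> Rabs (g s - g t) < eps.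

Lemma continuous_on_nonneg_of_derive (g : R -> R) :
  (forall t, 0 < t -> ex_derive g t) ->
  filterlim g (at_right 0) (locally (g 0)) -> continuous_on_nonneg g.
Proof.
  intros Hd Hr t Ht eps Heps.
  destruct (Rle_lt_or_eq_dec 0 t Ht) as [Htpos | <-].
  - assert (Hc : continuity_pt g t).
    { apply continuity_pt_filterlim, (ex_derive_continuous g), Hd, Htpos. }
    destruct (Hc eps Heps) as [del [Hdel Hnear]].
    exists del; split; [lra |]; intros s _ Hs.
    destruct (Req_dec s t) as [-> | Hst]; [rewrite Rminus_eq_0, Rabs_R0; exact Heps |].
    apply (Hnear s); split; [split; [exact I | auto] | exact Hs].
  - destruct (Hr _ (locally_ball (g 0) (mkposreal eps Heps))) as [del Hnear].
    exists del; split; [apply cond_pos |]; intros s Hs Hs0.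
    destruct (Rle_lt_or_eq_dec 0 s Hs) as [Hspos | <-].
    + exact (Hnear s Hs0 Hspos).
    + rewrite Rminus_eq_0, Rabs_R0; exact Heps.
Qed.

Lemma continuous_on_nonneg_comp (phi g : R -> R) :
  continuous_on_nonneg g -> (forall t, 0 <= t -> continuity_pt phi (g t)) ->
  continuous_on_nonneg (fun t => phi (g t)).
Proof.
  intros Hg Hphi t Ht eps Heps.
  destruct (Hphi t Ht eps Heps) as [a [Ha Hnear]].
  destruct (Hg t Ht a Ha) as [del [Hdel Hgnear]].
  exists del; split; [exact Hdel |]; intros s Hs Hst.
  destruct (Req_dec (g s) (g t)) as [-> | Hne]; [rewrite Rminus_eq_0, Rabs_R0; exact Heps |].
  apply (Hnear (g s)); split; [split; [exact I | auto] | exact (Hgnear s Hs Hst)].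
Qed.

(* Extending [g] by the constant [g 0] to the left gives a function continuous
   on the whole line, to which Coquelicot's integration theory applies. *)
Lemma continuous_clamp (g : R -> R) :
  continuous_on_nonneg g -> forall x, continuous (fun t => g (Rmax 0 t)) x.
Proof.
  intros Hg x. apply continuity_pt_filterlim. intros eps Heps.
  destruct (Hg (Rmax 0 x) (Rmax_l _ _) eps Heps) as [del [Hdel Hnear]].
  exists del; split; [lra |]; intros s [_ Hs]; simpl in Hs |- *; unfold R_dist in Hs |- *.
  apply Hnear; [apply Rmax_l |].
  eapply Rle_lt_trans; [| exact Hs].
  unfold Rmax; destruct (Rle_dec 0 s), (Rle_dec 0 x); unfold Rabs;
    repeat destruct Rcase_abs; lra.
Qed.

Lemma larger_just_before (g : R -> R) (t l : R) :
  is_derive g t l -> l < 0 -> exists del, 0 < del /\ forall s, t - del < s < t -> g t < g s.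
Proof.
  intros Hg Hl. apply is_derive_Reals in Hg.
  destruct (Hg (- l / 2)) as [del Hdel]; [lra |].
  exists del; split; [apply cond_pos |]; intros s Hs.
  assert (Hh : s - t <> 0) by lra.
  assert (Ha : Rabs (s - t) < del) by (rewrite Rabs_left; lra).
  specialize (Hdel (s - t) Hh Ha); replace (t + (s - t)) with s in Hdel by ring.
  set (q := (g s - g t) / (s - t)) in Hdel.
  assert (Hq : g s - g t = q * (s - t)) by (unfold q; field; exact Hh).
  apply Rabs_def2 in Hdel. nra.
Qed.

Lemma first_crossing (g : R -> R) (K t1 : R) :
  g 0 < K -> continuous_on_nonneg g -> 0 <= t1 -> K <= g t1 ->
  exists m, 0 < m <= t1 /\ g m = K /\ forall s, 0 <= s < m -> g s < K.
Proof.
  intros Hg0 Hc Ht1 Hgt1.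
  set (below := fun x => 0 <= x <= t1 /\ forall s, 0 <= s <= x -> g s < K).
  assert (Hbelow0 : below 0).
  { split; [lra |]; intros s Hs; replace s with 0 by lra; exact Hg0. }
  assert (Hbound : bound below) by (exists t1; intros x [[_ Hx] _]; exact Hx).
  destruct (completeness below Hbound (ex_intro _ 0 Hbelow0)) as [m [Hub Hlub]].
  assert (Hm0 : 0 <= m) by exact (Hub 0 Hbelow0).
  assert (Hmt1 : m <= t1) by (apply Hlub; intros x [[_ Hx] _]; exact Hx).
  assert (Hbefore : forall s, 0 <= s < m -> g s < K).
  { intros s Hs. destruct (Rlt_or_le (g s) K) as [Hlt | Hge]; [exact Hlt | exfalso].
    assert (m <= s); [| lra]. apply Hlub; intros x [_ Hx].
    destruct (Rle_or_lt x s) as [Hxs | Hsx]; [exact Hxs |].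
    specialize (Hx s ltac:(lra)); lra. }
  (* Continuity at [m] rules out [g m < K] (the set [below] would extend
     past [m]) and [g m > K] (it would fail just before [m]). *)
  destruct (Rtotal_order (g m) K) as [Hlt | [Heq | Hgt]].
  - exfalso. destruct (Hc m Hm0 (K - g m) ltac:(lra)) as [del [Hdel Hnear]].
    assert (Hmt : m < t1) by (destruct (Req_dec m t1) as [<- |]; lra).
    set (x := Rmin (m + del / 2) t1).
    assert (Hx : below x).
    { assert (Hxm : m < x) by (apply Rmin_glb_lt; lra).
      assert (Hxle : x <= m + del / 2) by apply Rmin_l.
      split; [split; [lra | apply Rmin_r] |]; intros s Hs.
      destruct (Rlt_or_le s m) as [Hsm | Hms]; [apply Hbefore; lra |].
      specialize (Hnear s ltac:(lra) ltac:(rewrite Rabs_right; lra)).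
      apply Rabs_def2 in Hnear; lra. }
    specialize (Hub x Hx). assert (m < x) by (apply Rmin_glb_lt; lra). lra.
  - assert (Hmpos : 0 < m) by (destruct (Req_dec m 0) as [-> |]; lra).
    exists m; repeat split; assumption.
  - exfalso. assert (Hmpos : 0 < m) by (destruct (Req_dec m 0) as [-> |]; lra).
    destruct (Hc m Hm0 (g m - K) ltac:(lra)) as [del [Hdel Hnear]].
    set (s := Rmax (m - del / 2) (m / 2)).
    assert (Hs1 : m - del / 2 <= s) by apply Rmax_l.
    assert (Hs2 : m / 2 <= s) by apply Rmax_r.
    assert (Hs3 : s < m) by (apply Rmax_lub_lt; lra).
    specialize (Hnear s ltac:(lra) ltac:(rewrite Rabs_left; lra)).
    apply Rabs_def2 in Hnear. specialize (Hbefore s ltac:(lra)). lra.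
Qed.

Lemma barrier (g : R -> R) (K : R) :
  g 0 < K -> continuous_on_nonneg g ->
  (forall t, 0 < t -> g t = K -> exists l, l < 0 /\ is_derive g t l) ->
  forall t, 0 <= t -> g t < K.
Proof.
  intros Hg0 Hc Hd t1 Ht1.
  destruct (Rlt_or_le (g t1) K) as [Hlt | Hge]; [exact Hlt | exfalso].
  destruct (first_crossing g K t1 Hg0 Hc Ht1 Hge) as [m [Hm [Hgm Hbefore]]].
  destruct (Hd m (proj1 Hm) Hgm) as [l [Hl Hder]].
  destruct (larger_just_before g m l Hder Hl) as [del [Hdel Hlarger]].
  set (s := Rmax (m - del / 2) (m / 2)).
  assert (Hs1 : m - del / 2 <= s) by apply Rmax_l.
  assert (Hs2 : m / 2 <= s) by apply Rmax_r.
  assert (Hs3 : s < m) by (apply Rmax_lub_lt; lra).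
  specialize (Hlarger s ltac:(lra)). specialize (Hbefore s ltac:(lra)). lra.
Qed.

Lemma ode_stays_below (g h : R -> R) (hi del : R) :
  0 < del -> continuous_on_nonneg g -> g 0 <= hi ->
  (forall t, 0 < t -> is_derive g t (h (g t))) ->
  (forall y, hi < y < hi + del -> h y < 0) ->
  forall t, 0 <= t -> g t <= hi.
Proof.
  intros Hdel Hc Hg0 Hd Hh t Ht.
  destruct (Rle_or_lt (g t) hi) as [Hle | Hgt]; [exact Hle | exfalso].
  set (eta := Rmin (g t - hi) (del / 2)).
  assert (Heta : 0 < eta) by (apply Rmin_glb_lt; lra).
  assert (Heta1 : eta <= g t - hi) by apply Rmin_l.
  assert (Heta2 : eta <= del / 2) by apply Rmin_r.
  assert (Hbelow : g t < hi + eta).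
  { apply (barrier g); [lra | exact Hc | | exact Ht].
    intros s Hs Hgs. exists (h (g s)); split; [apply Hh; lra | exact (Hd s Hs)]. }
  lra.
Qed.

Lemma ode_stays_above (g h : R -> R) (lo del : R) :
  0 < del -> continuous_on_nonneg g -> lo <= g 0 ->
  (forall t, 0 < t -> is_derive g t (h (g t))) ->
  (forall y, lo - del < y < lo -> 0 < h y) ->
  forall t, 0 <= t -> lo <= g t.
Proof.
  intros Hdel Hc Hg0 Hd Hh t Ht.
  enough (Hopp : - g t <= - lo) by lra.
  apply (ode_stays_below (fun t => - g t) (fun y => - h (- y)) (- lo) del);
    [exact Hdel | | lra | | | exact Ht].
  - apply (continuous_on_nonneg_comp Ropp g Hc).
    intros s _; apply continuity_pt_opp, continuity_pt_id.
  - intros s Hs. rewrite Ropp_involutive. apply (is_derive_opp g), Hd, Hs.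
  - intros y Hy. specialize (Hh (- y) ltac:(lra)). lra.
Qed.

(* Linear damping forces decay: if [g >= 0] and [g' <= -c g] on (0, +oo) with
   [c > 0], then [g(t) (1 + c t)] has nonpositive derivative, so it is bounded
   on [1, +oo) by its value at 1 ... *)
Lemma damped_weight_bound (g dg : R -> R) (c : R) :
  0 < c -> (forall t, 0 < t -> 0 <= g t) ->
  (forall t, 0 < t -> is_derive g t (dg t)) -> (forall t, 0 < t -> dg t <= - c * g t) ->
  forall t, 1 < t -> g t * (1 + c * t) <= g 1 * (1 + c).
Proof.
  intros Hc Hpos Hd Hdamp t Ht.
  set (w := fun s => g s * (1 + c * s)).
  assert (Hw : forall s, 0 < s -> is_derive w s (dg s * (1 + c * s) + g s * c)).
  { intros s Hs. apply (is_derive_mult g (fun s => 1 + c * s)); [exact (Hd s Hs) | | ].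
    - auto_derive; [exact I | ring].
    - intros; apply Rmult_comm. }
  destruct (MVT_gen w 1 t (fun s => dg s * (1 + c * s) + g s * c)) as [xi [Hxi Hmvt]].
  - intros s Hs; rewrite Rmin_left, Rmax_right in Hs by lra. apply Hw; lra.
  - intros s Hs; rewrite Rmin_left, Rmax_right in Hs by lra.
    apply continuity_pt_filterlim, (ex_derive_continuous w). eexists; apply Hw; lra.
  - rewrite Rmin_left, Rmax_right in Hxi by lra.
    assert (Hslope : dg xi * (1 + c * xi) + g xi * c <= 0).
    { assert (Hdxi : dg xi * (1 + c * xi) <= - c * g xi * (1 + c * xi)).
      { apply Rmult_le_compat_r; [nra | apply Hdamp; lra]. }
      assert (0 <= c * c * xi * g xi) by (pose proof (Hpos xi ltac:(lra));
        repeat apply Rmult_le_pos; lra).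
      lra. }
    unfold w in Hmvt. nra.
Qed.

Lemma damped_to_zero (g dg : R -> R) (c : R) :
  0 < c -> (forall t, 0 < t -> 0 <= g t) ->
  (forall t, 0 < t -> is_derive g t (dg t)) -> (forall t, 0 < t -> dg t <= - c * g t) ->
  filterlim g (Rbar_locally p_infty) (locally 0).
Proof.
  intros Hc Hpos Hd Hdamp.
  set (K := g 1 * (1 + c)).
  assert (HK : 0 <= K) by (pose proof (Hpos 1 ltac:(lra)); unfold K; nra).
  apply filterlim_locally; intros eps.
  pose proof (cond_pos eps) as Heps.
  exists (Rmax 1 (K / (c * eps))); intros t Ht.
  assert (Ht1 : 1 < t) by (eapply Rle_lt_trans; [apply Rmax_l | exact Ht]).
  assert (Ht2 : K / (c * eps) < t) by (eapply Rle_lt_trans; [apply Rmax_r | exact Ht]).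
  assert (HKt : K < c * eps * t).
  { apply (Rmult_lt_compat_l (c * eps)) in Ht2; [| nra].
    replace (c * eps * (K / (c * eps))) with K in Ht2 by (field; lra). exact Ht2. }
  pose proof (damped_weight_bound g dg c Hc Hpos Hd Hdamp t Ht1) as Hw; fold K in Hw.
  pose proof (Hpos t ltac:(lra)) as Hgt.
  change (Rabs (g t - 0) < eps). rewrite Rminus_0_r, Rabs_right by lra.
  apply (Rmult_lt_reg_r (1 + c * t)); nra.
Qed.

(* Fundamental theorem of calculus up to the boundary point 0: an antiderivative
   [G] of [f] on (0, +oo), both continuous on [0, +oo), computes the integral
   of [f] over [0, W].  The proof applies the mean value theorem to
   [x |-> RInt f 0 x - G x], after clamping both functions at 0. *)
Lemma is_RInt_antiderivative_nonneg (f G : R -> R) (W : R) :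
  continuous_on_nonneg f -> continuous_on_nonneg G ->
  (forall x, 0 < x -> is_derive G x (f x)) -> 0 < W ->
  is_RInt f 0 W (G W - G 0).
Proof.
  intros Hf HG Hd HW.
  set (fc := fun t => f (Rmax 0 t)). set (Gc := fun t => G (Rmax 0 t)).
  assert (Hfc : forall x, continuous fc x) by exact (continuous_clamp f Hf).
  assert (HGc : forall x, continuous Gc x) by exact (continuous_clamp G HG).
  assert (Hint : forall x, is_RInt fc 0 x (RInt fc 0 x)).
  { intros x. apply (RInt_correct (V := R_CompleteNormedModule)),
      (ex_RInt_continuous (V := R_CompleteNormedModule)); intros; apply Hfc. }
  assert (HdI : forall x, is_derive (fun x => RInt fc 0 x) x (fc x)).
  { intros x. apply (is_derive_RInt fc _ 0 x); [| apply Hfc].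
    apply filter_forall; intros y; apply Hint. }
  set (H := fun x => RInt fc 0 x - Gc x).
  destruct (MVT_gen H 0 W (fun _ => 0)) as [xi [_ Hmvt]].
  - rewrite Rmin_left, Rmax_right by lra; intros x Hx.
    replace 0 with (fc x - f x) by (unfold fc; rewrite Rmax_right by lra; ring).
    apply (is_derive_minus (fun x => RInt fc 0 x) Gc); [apply HdI |].
    apply (is_derive_ext_loc G); [| apply Hd; lra].
    assert (Hx0 : 0 < x) by lra.
    exists (mkposreal x Hx0); intros y Hy; unfold ball in Hy; simpl in Hy;
      unfold AbsRing_ball, abs, minus, plus, opp in Hy; simpl in Hy.
    unfold Gc; rewrite Rmax_right; [reflexivity |].
    apply Rabs_def2 in Hy; lra.
  - intros x _. apply continuity_pt_filterlim.
    apply (continuous_minus (fun x => RInt fc 0 x) Gc); [| apply HGc].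
    apply (ex_derive_continuous (fun x => RInt fc 0 x)); eexists; apply HdI.
  - assert (HI : RInt fc 0 W = G W - G 0).
    { unfold H, Gc in Hmvt. rewrite RInt_point, !Rmax_right in Hmvt by lra.
      unfold zero in Hmvt; simpl in Hmvt. lra. }
    apply (is_RInt_ext fc); [| rewrite <- HI; apply Hint].
    rewrite Rmin_left, Rmax_right by lra; intros x Hx.
    unfold fc; rewrite Rmax_right by lra; reflexivity.
Qed.

Lemma is_RInt_gen_of_lim (f I : R -> R) (l : R) :
  (forall W, 0 < W -> is_RInt f 0 W (I W)) ->
  filterlim I (Rbar_locally p_infty) (locally l) ->
  is_RInt_gen f (at_point 0) (Rbar_locally p_infty) l.
Proof.
  intros Hpart Hlim P [eps HP].
  destruct (Hlim _ (locally_ball l eps)) as [M HM].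
  apply Filter_prod with (Q := fun x => x = 0) (R := fun y => Rmax M 0 < y).
  - reflexivity.
  - exists (Rmax M 0); auto.
  - intros x y -> Hy; simpl.
    assert (Hy0 : 0 < y) by (eapply Rle_lt_trans; [apply Rmax_r | exact Hy]).
    assert (HyM : M < y) by (eapply Rle_lt_trans; [apply Rmax_l | exact Hy]).
    exists (I y); split; [exact (Hpart y Hy0) | apply HP, HM, HyM].
Qed.

Definition bLL (p lam : R) : R := 1 - (1 - p) * lam.

Definition rate (e : nat) (p lam y : R) : R := bLL p lam - lam * p * y ^ S e.

Lemma LL_rhs_factor (e : nat) (p lam y : R) :
  lam * (p * y ^ S (S e) + (1 - p) * y) - y = - (y * rate e p lam y).
Proof. unfold rate, bLL. change (y ^ S (S e)) with (y * y ^ S e). ring. Qed.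

Section Rate.

Variables (e : nat) (p lam : R).
Hypotheses (Hp : 0 < p <= 1) (Hlam : 0 < lam < 1).

(* The gap [c = b - p lam^d] is positive, because [lam^(d-1) < 1]. *)
Lemma gap_pos : 0 < bLL p lam - p * lam ^ S (S e).
Proof.
  unfold bLL. pose proof (pow_lt_1_compat lam (S e) ltac:(lra) (Nat.lt_0_succ e)).
  change (lam ^ S (S e)) with (lam * lam ^ S e).
  assert (0 < p * lam * (1 - lam ^ S e)) by (apply Rmult_lt_0_compat; [apply Rmult_lt_0_compat |]; lra).
  nra.
Qed.

Lemma rate_ge_gap (y : R) : Rabs y <= lam -> bLL p lam - p * lam ^ S (S e) <= rate e p lam y.
Proof.
  intros Hy. unfold rate. change (lam ^ S (S e)) with (lam * lam ^ S e).
  assert (Hpow : y ^ S e <= lam ^ S e).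
  { eapply Rle_trans; [apply Rle_abs |]. rewrite <- RPow_abs.
    apply pow_incr; split; [apply Rabs_pos | exact Hy]. }
  assert (lam * p * y ^ S e <= lam * p * lam ^ S e) by (apply Rmult_le_compat_l; nra).
  lra.
Qed.

Lemma rate_pos (y : R) : Rabs y <= lam -> 0 < rate e p lam y.
Proof. intros Hy. pose proof (rate_ge_gap y Hy). pose proof gap_pos. lra. Qed.

Lemma rate_pos_above_lam : exists del, 0 < del /\ forall y, lam < y < lam + del -> 0 < rate e p lam y.
Proof.
  assert (Hr : 0 < rate e p lam lam) by (apply rate_pos; rewrite Rabs_right; lra).
  assert (Hc : continuity_pt (rate e p lam) lam).
  { apply continuity_pt_filterlim, (ex_derive_continuous (rate e p lam)).
    unfold rate; auto_derive; exact I. }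
  destruct (Hc _ Hr) as [del [Hdel Hnear]].
  exists del; split; [exact Hdel |]; intros y Hy.
  assert (Hd : R_dist (rate e p lam y) (rate e p lam lam) < rate e p lam lam).
  { apply Hnear; split; [split; [exact I | lra] |].
    simpl; unfold R_dist; rewrite Rabs_right; lra. }
  unfold R_dist in Hd; apply Rabs_def2 in Hd; lra.
Qed.

Section Solution.

Variable F : R -> R.
Hypothesis HF : is_LL_solution (S (S e)) p lam F.

Lemma F_derive (t : R) : 0 < t -> is_derive F t (- (F t * rate e p lam (F t))).
Proof. intros Ht. rewrite <- LL_rhs_factor. apply (proj1 HF), Ht. Qed.

Lemma F_continuous : continuous_on_nonneg F.
Proof.
  apply continuous_on_nonneg_of_derive; [| apply (proj2 HF)].
  intros t Ht; eexists; apply F_derive, Ht.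
Qed.

(* [0, lam] is invariant: the drift [- y r(y)] points inwards just outside it. *)
Lemma F_bounds (t : R) : 0 <= t -> 0 <= F t <= lam.
Proof.
  intros Ht. set (h := fun y => - (y * rate e p lam y)).
  assert (HF0 : F 0 = lam) by apply (proj2 (proj2 HF)).
  split.
  - apply (ode_stays_above F h 0 lam); [lra | exact F_continuous | lra | exact F_derive | | exact Ht].
    intros y Hy. assert (0 < rate e p lam y) by (apply rate_pos; rewrite Rabs_left; lra).
    unfold h; nra.
  - destruct rate_pos_above_lam as [del [Hdel Habove]].
    apply (ode_stays_below F h lam del); [exact Hdel | exact F_continuous | lra | exact F_derive | | exact Ht].
    intros y Hy. specialize (Habove y Hy). unfold h; nra.
Qed.

(* The queue tail decays: [F' <= - c F] with the gap [c > 0]. *)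
Lemma F_to_zero : filterlim F (Rbar_locally p_infty) (locally 0).
Proof.
  apply (damped_to_zero F (fun t => - (F t * rate e p lam (F t))) _ gap_pos).
  - intros t Ht; apply F_bounds; lra.
  - exact F_derive.
  - intros t Ht. destruct (F_bounds t ltac:(lra)) as [H0 H1].
    assert (Hrate := rate_ge_gap (F t) ltac:(rewrite Rabs_right; lra)). nra.
Qed.

(* Integration by substitution: if [Psi' = 1/r] on [0, lam], then
   [(Psi o F)' = - F], so the mean workload is [Psi lam - Psi 0]. *)
Lemma integral_by_potential (Psi : R -> R) :
  (forall y, 0 <= y <= lam -> is_derive Psi y (/ rate e p lam y)) ->
  is_RInt_gen F (at_point 0) (Rbar_locally p_infty) (Psi lam - Psi 0).
Proof.
  intros HPsi.
  assert (HF0 : F 0 = lam) by apply (proj2 (proj2 HF)).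
  assert (HPsi_cont : forall y, 0 <= y <= lam -> continuity_pt Psi y).
  { intros y Hy. apply continuity_pt_filterlim, (ex_derive_continuous Psi).
    eexists; apply HPsi, Hy. }
  apply (is_RInt_gen_of_lim F (fun W => Psi lam - Psi (F W))).
  - intros W HW. rewrite <- HF0.
    replace (Psi (F 0) - Psi (F W)) with ((- Psi (F W)) - (- Psi (F 0))) by ring.
    apply (is_RInt_antiderivative_nonneg F (fun t => - Psi (F t))); [exact F_continuous | | | exact HW].
    + apply (continuous_on_nonneg_comp (fun y => - Psi y) F F_continuous).
      intros t Ht. apply continuity_pt_opp, HPsi_cont, F_bounds, Ht.
    + intros x Hx. destruct (F_bounds x ltac:(lra)) as [H0 H1].
      assert (Hr := rate_pos (F x) ltac:(rewrite Rabs_right; lra)).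
      assert (Hd := is_derive_opp _ x _ (is_derive_comp Psi F x _ _
        (HPsi (F x) (conj H0 H1)) (F_derive x Hx))).
      assert (Hslope : opp (scal (- (F x * rate e p lam (F x))) (/ rate e p lam (F x))) = F x).
      { unfold opp, scal; simpl; unfold mult; simpl. field; lra. }
      rewrite <- Hslope; exact Hd.
  - apply (filterlim_comp _ _ _ F (fun y => Psi lam - Psi y) _ (locally 0)); [exact F_to_zero |].
    apply (continuity_pt_filterlim (fun y => Psi lam - Psi y) 0), continuity_pt_minus;
      [apply continuity_pt_const; intros ? ?; reflexivity | apply HPsi_cont; lra].
Qed.

End Solution.
End Rate.

Definition phi_coef (k : R) (n : nat) : R := / (1 + INR n * k).

(* Its coefficients are bounded by 1, so its radius of convergence is >= 1. *)
Lemma phi_radius (k x : R) : 0 <= k -> Rabs x < 1 -> Rbar_lt (Rabs x) (CV_radius (phi_coef k)).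
Proof.
  intros Hk Hx.
  assert (H1 : Rbar_le 1 (CV_radius (phi_coef k))).
  { apply (proj1 (CV_radius_bounded (phi_coef k))).
    exists 1; intros n. rewrite pow1, Rmult_1_r. unfold phi_coef.
    assert (1 <= 1 + INR n * k) by (pose proof (pos_INR n); nra).
    rewrite Rabs_right by (apply Rle_ge, Rlt_le, Rinv_0_lt_compat; lra).
    rewrite <- Rinv_1; apply Rinv_le_contravar; lra. }
  eapply Rbar_lt_le_trans; [| exact H1]. exact Hx.
Qed.

(* [Phi_k] solves [Phi + k x Phi' = 1 / (1 - x)]: coefficientwise this is
   [(1 + n k) / (1 + n k) = 1], the geometric series. *)
Lemma phi_ode (k x : R) : 0 <= k -> Rabs x < 1 ->
  PSeries (phi_coef k) x + k * x * PSeries (PS_derive (phi_coef k)) x = / (1 - x).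
Proof.
  intros Hk Hx. pose proof (phi_radius k x Hk Hx) as Hrad.
  set (a := phi_coef k).
  assert (Hgeom : PSeries (fun _ => 1) x = / (1 - x)).
  { apply is_pseries_unique. unfold is_pseries.
    apply (is_series_ext (fun n => x ^ n)); [| apply is_series_geom, Hx].
    intros n; unfold scal; simpl; unfold mult; simpl. rewrite Rmult_1_r; symmetry; apply pow_n_pow. }
  assert (Hshift : x * PSeries (PS_derive a) x = PSeries (fun n => INR n * a n) x).
  { rewrite <- PSeries_incr_1. apply PSeries_ext; intros [| n]; simpl; [| reflexivity].
    unfold zero; simpl; ring. }
  rewrite Rmult_assoc, Hshift, <- (PSeries_scal k), <- PSeries_plus, <- Hgeom.
  - apply PSeries_ext; intros n. unfold PS_plus, PS_scal, plus, scal; simpl; unfold mult; simpl.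
    unfold a, phi_coef. assert (0 < 1 + INR n * k) by (pose proof (pos_INR n); nra).
    field; lra.
  - apply CV_radius_inside, Hrad.
  - apply ex_pseries_scal; [apply Rmult_comm |].
    apply (ex_pseries_ext (PS_incr_1 (PS_derive a))).
    + intros [| n]; simpl; [unfold zero; simpl; ring | reflexivity].
    + apply ex_pseries_incr_1, ex_pseries_derive, Hrad.
Qed.

Section Potentials.

Variables (p lam : R).
Hypotheses (Hp : 0 < p <= 1) (Hlam : 0 < lam < 1).

Lemma bLL_pos : 0 < bLL p lam.
Proof. unfold bLL; nra. Qed.

Definition psi_series (e : nat) (y : R) : R :=
  y / bLL p lam * PSeries (phi_coef (INR (S e))) (lam * p / bLL p lam * y ^ S e).

Lemma psi_series_derive (e : nat) (y : R) : 0 <= y <= lam ->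
  is_derive (psi_series e) y (/ rate e p lam y).
Proof.
  intros Hy. pose proof bLL_pos as Hb.
  assert (Hr := rate_pos e p lam Hp Hlam y ltac:(rewrite Rabs_right; lra)).
  unfold rate in Hr |- *.
  set (b := bLL p lam) in *. set (k := INR (S e)). set (x := lam * p / b * y ^ S e).
  set (Phi := PSeries (phi_coef k)). set (dPhi := PSeries (PS_derive (phi_coef k))).
  assert (Hx : Rabs x < 1).
  { assert (0 <= y ^ S e) by (apply pow_le; lra).
    rewrite Rabs_right; unfold x.
    - apply (Rmult_lt_reg_r b); [exact Hb |]. field_simplify; lra.
    - apply Rle_ge, Rmult_le_pos; [apply Rmult_le_pos; [nra | left; apply Rinv_0_lt_compat, Hb] | lra]. }
  assert (Hk : 0 <= k) by apply pos_INR.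
  assert (Hode := phi_ode k x Hk Hx). fold Phi dPhi in Hode.
  assert (Hinner : is_derive (fun y => Phi (lam * p / b * y ^ S e)) y
                     (scal (lam * p / b * (k * y ^ e)) (dPhi x))).
  { apply (is_derive_comp Phi (fun y => lam * p / b * y ^ S e)).
    - apply is_derive_PSeries, phi_radius; assumption.
    - unfold k; auto_derive; [exact I | simpl; ring]. }
  assert (Hprod := is_derive_mult (fun y => y / b) _ y (/ b) _
                     ltac:(auto_derive; [exact I | field; lra]) Hinner Rmult_comm).
  assert (Hslope : plus (mult (/ b) (Phi x)) (mult (y / b) (scal (lam * p / b * (k * y ^ e)) (dPhi x)))
                   = / b * (Phi x + k * x * dPhi x)).
  { unfold plus, mult, scal; simpl; unfold mult; simpl. unfold x; simpl. field; lra. }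
  assert (Hne : 1 - x <> 0) by (intros Hx0; rewrite Rabs_lt_between in Hx; lra).
  rewrite Hode in Hslope.
  replace (/ (b - lam * p * y ^ S e)) with (/ b * / (1 - x)).
  - rewrite <- Hslope. exact Hprod.
  - unfold x. field. split; lra.
Qed.

Definition psi_log (y : R) : R := - ln (1 - lam * p * y / bLL p lam) / (p * lam).

Lemma psi_log_derive (y : R) : 0 <= y <= lam -> is_derive psi_log y (/ rate 0 p lam y).
Proof.
  intros Hy. pose proof bLL_pos as Hb.
  assert (Hr := rate_pos 0 p lam Hp Hlam y ltac:(rewrite Rabs_right; lra)).
  unfold rate in Hr. rewrite pow_1 in Hr.
  assert (Hlt : lam * p * y / bLL p lam < 1).
  { apply (Rmult_lt_reg_r (bLL p lam)); [exact Hb |]. field_simplify; lra. }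
  unfold psi_log, rate; rewrite pow_1. auto_derive.
  - lra.
  - field. repeat split; lra.
Qed.

End Potentials.

Theorem proposition4p7 (d : nat) (p lam : R) (F : R -> R) :
  (2 <= d)%nat -> 0 < p <= 1 -> 0 < lam < 1 ->
  is_LL_solution d p lam F ->
  let b := 1 - (1 - p) * lam in
  (exists S : R,
     is_series (fun n : nat =>
        / (1 + INR n * (INR d - 1)) * (p * lam ^ d / b) ^ n) S /\
     is_RInt_gen F (at_point 0) (Rbar_locally p_infty) (lam / b * S)) /\
  (d = 2%nat ->
     is_RInt_gen F (at_point 0) (Rbar_locally p_infty)
       (- ln (1 - p * lam ^ 2 / b) / (p * lam))).
Proof.
  intros Hd Hp Hlam HF b.
  destruct d as [| [| e]]; [lia | lia |].
  pose proof (bLL_pos p lam Hp Hlam) as Hb; change (bLL p lam) with b in Hb.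
  split.
  -
    set (x := p * lam ^ S (S e) / b).
    assert (Hx : Rabs x < 1).
    { pose proof (gap_pos e p lam Hp Hlam). assert (0 <= p * lam ^ S (S e)) by
        (apply Rmult_le_pos; [lra | apply pow_le; lra]).
      change (bLL p lam) with b in *. unfold x. rewrite Rabs_right.
      - apply (Rmult_lt_reg_r b); [exact Hb |]. field_simplify; lra.
      - apply Rle_ge, Rdiv_le_0_compat; lra. }
    replace (INR (S (S e)) - 1) with (INR (S e)) by (rewrite (S_INR (S e)); ring).
    exists (PSeries (phi_coef (INR (S e))) x); split.
    + apply (is_series_ext (fun n => scal (pow_n x n) (phi_coef (INR (S e)) n))).
      * intros n. rewrite pow_n_pow. apply Rmult_comm.
      * apply PSeries_correct, CV_radius_inside, phi_radius; [apply pos_INR | exact Hx].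
    + replace (lam / b * PSeries (phi_coef (INR (S e))) x)
        with (psi_series p lam e lam - psi_series p lam e 0).
      * apply (integral_by_potential e p lam Hp Hlam F HF), psi_series_derive; assumption.
      * unfold psi_series, x. change (bLL p lam) with b.
        replace (lam * p / b * lam ^ S e) with (p * lam ^ S (S e) / b) by (simpl; field; lra).
        unfold Rdiv; ring.
  -
    intros Hd2. injection Hd2 as ->.
    replace (- ln (1 - p * lam ^ 2 / b) / (p * lam)) with (psi_log p lam lam - psi_log p lam 0).
    + apply (integral_by_potential 0 p lam Hp Hlam F HF), psi_log_derive; assumption.
    + unfold psi_log. change (bLL p lam) with b.
      replace (lam * p * 0 / b) with 0 by (field; lra). rewrite Rminus_0_r, ln_1.
      replace (lam * p * lam / b) with (p * lam ^ 2 / b) by (simpl; field; lra).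
      field; lra.
Qed.
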